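(* A finite distributive lattice $\mathcal{L}$ is a tree lattice if and only if it is an honest lattice.
   Context: An element $x$ of $\mathcal{L}$ is join-irreducible if $x = y \vee z$ implies $x = y$ or $x = z$; $J(\mathcal{L})$ is the poset of join-irreducibles with the induced order. $\mathcal{L}$ is a tree lattice if the Hasse diagram of $J(\mathcal{L})$ is a tree. $\mathcal{L}$ is honest if for all $\alpha, \beta \in J(\mathcal{L})$ such that $\alpha$ covers $\beta$ in the poset $J(\mathcal{L})$, $\alpha$ also covers $\beta$ in $\mathcal{L}$ (where $\alpha$ covers $\beta$ means $\alpha > \beta$ and no element lies strictly between them). *)

From HB Require Import structures.
From mathcomp Require Import all_boot all_order.
Set Implicit Arguments. Unset Strict Implicit. Unset Printing Implicit Defensive.
Import Order.TTheory.
Local Open Scope order_scope.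

Section Defs.
Context {d : Order.disp_t} {T : finTBDistrLatticeType d}.

(* x is join-irreducible: x = y \/ z implies x = y or x = z (literally as in the paper;
   in particular the bottom element is join-irreducible). *)
Definition join_irr (x : T) : bool :=
  [forall y : T, forall z : T, (x == y `|` z) ==> ((x == y) || (x == z))].

Definition covers (x y : T) : bool :=
  (y < x) && [forall z : T, ~~ ((y < z) && (z < x))].

Definition coversJ (x y : T) : bool :=
  [&& join_irr x, join_irr y, y < x &
      [forall z : T, join_irr z ==> ~~ ((y < z) && (z < x))]].

(* undirected Hasse diagram of J(L), vertex set = join-irreducibles *)
Definition hasseJ : rel T := fun x y => coversJ x y || coversJ y x.

Definition has_cycle (e : rel T) : Prop :=
  exists s : seq T, [/\ 3 <= size s, uniq s & cycle e s]%N.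

Definition tree_lattice : Prop :=
  (forall x y : T, join_irr x -> join_irr y -> connect hasseJ x y) /\
  ~ has_cycle hasseJ.

Definition honest : Prop :=
  forall a b : T, join_irr a -> join_irr b -> coversJ a b -> covers a b.

End Defs.
Arguments tree_lattice {d} T.
Arguments honest {d} T.

From HB Require Import structures.
From mathcomp Require Import all_boot all_order.

(* Every join-irreducible descends to the bottom (itself join-irreducible)
   along covers of J(L), so the Hasse diagram of J(L) is always connected and
   being a tree amounts to being acyclic.

   If L is honest, the largest vertex x of a cycle has two distinct neighbours,
   both covered by x in J(L) and hence in L; but a join-irreducible has at most
   one lower cover in L, since two of them would join to x.

   Conversely, if a covers b in J(L) but not in L, pick b < z < a and a
   join-irreducible j <= z with j not below b; a lower cover c of a in J(L)
   above j is incomparable with b.  For a maximal join-irreducible m below b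
   and c, the J(L)-chains from b and from c down to m meet only at m, and
   together with a they form a cycle. *)

Set Implicit Arguments. Unset Strict Implicit. Unset Printing Implicit Defensive.
Import Order.TTheory.

Section FinPOrder.
Local Open Scope order_scope.
Context {d : Order.disp_t} {T : finPOrderType d}.
Implicit Types x y z : T.

Definition down_card x := #|[pred y | y < x]|.

Lemma down_card_lt x y : x < y -> (down_card x < down_card y)%N.
Proof.
move=> lt_xy; apply: proper_card; apply/properP; split.
  by apply/subsetP => z; rewrite !inE => /lt_trans; apply.
by exists x; rewrite !inE ?ltxx.
Qed.

Lemma lt_ind (P : T -> Prop) :
  (forall x, (forall y, y < x -> P y) -> P x) -> forall x, P x.
Proof.
move=> IH x; have [n le_x_n] := ubnP (down_card x).
elim: n x le_x_n => // n IHn x lt_x_n; apply: IH => y /down_card_lt lt_y_x.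
exact/IHn/(leq_trans lt_y_x).
Qed.

Lemma ex_maximal (P : pred T) x0 : P x0 ->
  exists2 m, P m & forall z, P z -> ~~ (m < z).
Proof.
move=> P_x0; case: (arg_maxnP down_card P_x0) => m Pm max_m.
exists m => // z Pz; apply: contraTN (max_m z Pz); rewrite -ltnNge.
exact: down_card_lt.
Qed.

Lemma ex_minimal (P : pred T) x0 : P x0 ->
  exists2 m, P m & forall z, P z -> ~~ (z < m).
Proof.
move=> P_x0; case: (arg_minnP down_card P_x0) => m Pm min_m.
exists m => // z Pz; apply: contraTN (min_m z Pz); rewrite -ltnNge.
exact: down_card_lt.
Qed.

End FinPOrder.

Section Cycles.
Variables (T : eqType) (e : rel T).

Lemma cycle_neighbours x s : x \in s -> uniq s -> cycle e s -> (3 <= size s)%N ->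
  exists y z, [/\ y \in s, z \in s, y != z, e x y & e z x].
Proof.
move=> s_x; rewrite -(rot_uniq (index x s)) -(rot_cycle (index x s)).
rewrite -(size_rot (index x s)); have := mem_rot (index x s) s; rewrite rot_index //.
elim/last_ind: (drop _ _ ++ take _ _) => [|[|y t] z _] // mem_r.
rewrite [uniq _]/= rcons_uniq mem_rcons !inE => /and4P[_ /norP[ne_y_z _] _ _].
rewrite [cycle _ _]/= rcons_path last_rcons /= => /and3P[e_xy _ e_zx] _.
by exists y, z; rewrite -!mem_r !in_cons !mem_rcons !inE !eqxx !orbT.
Qed.

Lemma cycle_of_paths a b c m p q : symmetric e -> e a b -> e a c ->
  path e b (rcons p m) -> path e c (rcons q m) ->
  cycle e (a :: b :: p ++ m :: rev (c :: q)).
Proof.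
move=> e_sym e_ab e_ac path_b path_c.
rewrite /= -cat_rcons rcons_cat e_ab cat_path last_rcons path_b rcons_path.
rewrite rev_cons last_rcons e_sym e_ac andbT -rev_cons.
have := rev_path e c (rcons q m); rewrite last_rcons belast_rcons => ->.
by rewrite (eq_path (e' := e)) // => u v; rewrite e_sym.
Qed.

End Cycles.

Section Lattice.
Local Open Scope order_scope.
Context {d : Order.disp_t} {T : finTBDistrLatticeType d}.
Implicit Types a b c j m x y z : T.

Lemma join_irr0 : join_irr (\bot : T).
Proof.
apply/forallP => y; apply/forallP => z; apply/implyP => /eqP bot_yz.
by rewrite eq_sym -lex0 bot_yz leUl.
Qed.

Lemma join_irrP x :
  reflect (forall y z, x = y `|` z -> x = y \/ x = z) (join_irr x).
Proof.
apply: (iffP forallP) => [ji_x y z x_yz | split_x y].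
  by move/forallP: (ji_x y) => /(_ z) /implyP; rewrite x_yz eqxx => /(_ isT) /orP[] /eqP;
    [left | right].
by apply/forallP => z; apply/implyP => /eqP /split_x [] ->; rewrite eqxx ?orbT.
Qed.

Lemma coversJP x y : reflect
  [/\ join_irr x, join_irr y, y < x & forall z, join_irr z -> ~~ (y < z < x)]
  (coversJ x y).
Proof.
apply: (iffP and4P) => [] [-> -> -> between]; split=> //.
  by move=> z; move/forallP: between => /(_ z) /implyP.
by apply/forallP => z; apply/implyP; apply: between.
Qed.

Lemma ex_join_irr_le x b : ~~ (x <= b) ->
  exists2 j, join_irr j & (j <= x) && ~~ (j <= b).
Proof.
move=> x_nle_b; have x_ok : (x <= x) && ~~ (x <= b) by rewrite lexx.
have [j /andP[j_le_x j_nle_b] min_j] :=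
  ex_minimal (P := [pred u | (u <= x) && ~~ (u <= b)]) x_ok.
exists j; last by rewrite j_le_x.
have below_b u : u < j -> u <= b.
  move=> u_lt_j; apply: contraTT (u_lt_j) => u_nle_b; apply: min_j.
  by rewrite inE (le_trans (ltW u_lt_j)).
apply/join_irrP => y z j_yz.
have [<-|ne_jy] := eqVneq j y; first by left.
have [<-|ne_jz] := eqVneq j z; first by right.
have y_lt_j : y < j by rewrite lt_neqAle eq_sym ne_jy j_yz leUl.
have z_lt_j : z < j by rewrite lt_neqAle eq_sym ne_jz j_yz leUr.
by move: j_nle_b; rewrite j_yz leUx !below_b.
Qed.

Lemma covers_eq x y u : covers x y -> y < u -> u <= x -> u = x.
Proof.
case/andP=> _ /forallP /(_ u) nbetween y_lt_u; rewrite le_eqVlt.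
by move: nbetween; rewrite y_lt_u /= => /negbTE-> /orP[/eqP|].
Qed.

Lemma join_irr_covers_uniq x y z : join_irr x -> covers x y -> covers x z -> y = z.
Proof.
move=> ji_x cov_y cov_z; apply/eqP; apply: contraT => ne_yz.
have [y_lt_x z_lt_x] : y < x /\ z < x by case/andP: cov_y; case/andP: cov_z.
have z_nle_y : ~~ (z <= y).
  apply: contraTN (y_lt_x) => z_le_y.
  by rewrite (covers_eq cov_z _ (ltW y_lt_x)) ?ltxx // lt_neqAle z_le_y andbT eq_sym.
have x_yz : x = y `|` z.
  apply/esym/(covers_eq cov_y); last by rewrite leUx !ltW.
  by rewrite lt_neqAle leUl andbT eq_sym eq_joinl z_nle_y.
have [eq_xy|eq_xz] := join_irrP _ ji_x _ _ x_yz.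
  by move: y_lt_x; rewrite eq_xy ltxx.
by move: z_lt_x; rewrite eq_xz ltxx.
Qed.

Lemma ex_coversJ_ge x y : join_irr x -> join_irr y -> y < x ->
  exists2 u, coversJ x u & y <= u.
Proof.
move=> ji_x ji_y y_lt_x.
have y_ok : [&& join_irr y, y <= y & y < x] by rewrite ji_y lexx.
have [u /and3P[ji_u y_le_u u_lt_x] max_u] :=
  ex_maximal (P := [pred u | [&& join_irr u, y <= u & u < x]]) y_ok.
exists u => //; apply/coversJP; split=> // z ji_z.
apply/negP => /andP[u_lt_z z_lt_x]; suff: ~~ (u < z) by rewrite u_lt_z.
by apply: max_u; rewrite inE ji_z z_lt_x (le_trans y_le_u (ltW u_lt_z)).
Qed.

Lemma coversJ_chain x y : join_irr x -> join_irr y -> y < x ->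
  exists q, [/\ path coversJ x (rcons q y), uniq (x :: q)
    & {in x :: q, forall u, join_irr u && (y < u <= x)}].
Proof.
elim/(@lt_ind _ T): x => x IH ji_x ji_y y_lt_x.
have [u cov_xu y_le_u] := ex_coversJ_ge ji_x ji_y y_lt_x.
have [_ ji_u u_lt_x _] := coversJP _ _ cov_xu.
have x_range : join_irr x && (y < x <= x) by rewrite ji_x y_lt_x lexx.
have [eq_uy|ne_uy] := eqVneq u y.
  exists [::]; split=> //= [|v]; first by rewrite -eq_uy cov_xu.
  by rewrite inE => /eqP->.
have y_lt_u : y < u by rewrite lt_neqAle eq_sym ne_uy.
have [q [path_q uniq_q in_q]] := IH u u_lt_x ji_u ji_y y_lt_u.
exists (u :: q); split; first by rewrite /= cov_xu.
  rewrite cons_uniq uniq_q andbT; apply/negP => /in_q /and3P[_ _].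
  by rewrite lt_geF.
move=> v; rewrite inE => /orP[/eqP-> // | /in_q /and3P[-> -> v_le_u]].
by rewrite (le_trans v_le_u (ltW u_lt_x)).
Qed.

Lemma hasseJ_sym : symmetric (hasseJ (T:=T)).
Proof. by move=> x y; rewrite /hasseJ orbC. Qed.

Lemma sub_coversJ_hasseJ : subrel coversJ (hasseJ (T:=T)).
Proof. by move=> x y cov; rewrite /hasseJ cov. Qed.

Lemma connect_hasseJ_bot x : join_irr x -> connect hasseJ x \bot.
Proof.
move=> ji_x; have [->|ne_x0] := eqVneq x \bot; first exact: connect0.
have [|q [path_q _ _]] := coversJ_chain ji_x join_irr0; first by rewrite lt0x.
apply/connectP; exists (rcons q \bot); last by rewrite last_rcons.
exact: sub_path sub_coversJ_hasseJ _ _ path_q.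
Qed.

Lemma connect_hasseJ x y : join_irr x -> join_irr y -> connect hasseJ x y.
Proof.
move=> ji_x ji_y; apply: connect_trans (connect_hasseJ_bot ji_x) _.
by rewrite (sym_connect_sym hasseJ_sym) connect_hasseJ_bot.
Qed.

Lemma honest_acyclic : honest T -> ~ has_cycle (hasseJ (T:=T)).
Proof.
move=> honest_T [s [size_s uniq_s cycle_s]].
have s_x0 : nth \bot s 0 \in s by rewrite mem_nth // (leq_trans _ size_s).
have [x s_x max_x] := ex_maximal (P := mem s) s_x0.
have cov_x u : u \in s -> hasseJ x u -> coversJ x u.
  move=> s_u /orP[// | /coversJP[_ _ x_lt_u _]].
  by move: (max_x u s_u); rewrite x_lt_u.
have [y [z [s_y s_z ne_yz e_xy e_zx]]] := cycle_neighbours s_x uniq_s cycle_s size_s.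
rewrite hasseJ_sym in e_zx.
have [cov_xy cov_xz] := (cov_x y s_y e_xy, cov_x z s_z e_zx).
have [ji_x ji_y _ _] := coversJP _ _ cov_xy; have [_ ji_z _ _] := coversJP _ _ cov_xz.
have := join_irr_covers_uniq ji_x (honest_T _ _ ji_x ji_y cov_xy)
  (honest_T _ _ ji_x ji_z cov_xz).
by move/eqP; rewrite (negbTE ne_yz).
Qed.

Lemma coversJ_sibling a b : coversJ a b -> ~~ covers a b ->
  exists2 c, coversJ a c & ~~ (c <= b) && ~~ (b <= c).
Proof.
move=> cov_ab; have [ji_a ji_b b_lt_a nbetween] := coversJP _ _ cov_ab.
rewrite /covers b_lt_a => /forallPn [z /negPn /andP[b_lt_z z_lt_a]].
have z_nle_b : ~~ (z <= b) by rewrite lt_geF.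
have [j ji_j /andP[j_le_z j_nle_b]] := ex_join_irr_le z_nle_b.
have [c cov_ac j_le_c] := ex_coversJ_ge ji_a ji_j (le_lt_trans j_le_z z_lt_a).
have [_ ji_c c_lt_a _] := coversJP _ _ cov_ac.
have c_nle_b : ~~ (c <= b) by apply: contraNN j_nle_b; apply: le_trans.
exists c => //; rewrite c_nle_b /=; apply: contraNN (nbetween c ji_c) => b_le_c.
by rewrite c_lt_a andbT lt_neqAle b_le_c andbT; apply: contraNneq c_nle_b => ->.
Qed.

Lemma siblings_cycle a b c : coversJ a b -> coversJ a c -> ~~ (c <= b) -> ~~ (b <= c) ->
  has_cycle (hasseJ (T:=T)).
Proof.
move=> cov_ab cov_ac c_nle_b b_nle_c.
have [ji_a ji_b b_lt_a _] := coversJP _ _ cov_ab.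
have [_ ji_c c_lt_a _] := coversJP _ _ cov_ac.
have bot_ok : [&& join_irr (\bot : T), \bot <= b & \bot <= c] by rewrite join_irr0 !le0x.
have [m /and3P[ji_m m_le_b m_le_c] max_m] :=
  ex_maximal (P := [pred u | [&& join_irr u, u <= b & u <= c]]) bot_ok.
have m_lt_b : m < b by rewrite lt_neqAle m_le_b andbT; apply: contraNneq b_nle_c => <-.
have m_lt_c : m < c by rewrite lt_neqAle m_le_c andbT; apply: contraNneq c_nle_b => <-.
have [qb [path_b uniq_b in_b]] := coversJ_chain ji_b ji_m m_lt_b.
have [qc [path_c uniq_c in_c]] := coversJ_chain ji_c ji_m m_lt_c.
have below_a u : u \in (b :: qb) ++ m :: rev (c :: qc) -> u < a.
  rewrite mem_cat (in_cons m) mem_rev => /or3P[/in_b | /eqP-> | /in_c]; last first.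
  - by case/and3P=> _ _ /le_lt_trans->.
  - exact: lt_trans m_lt_b b_lt_a.
  - by case/and3P=> _ _ /le_lt_trans->.
exists (a :: b :: qb ++ m :: rev (c :: qc)); split.
- by rewrite /= size_cat /= addnS.
- rewrite -cat_cons cons_uniq cat_uniq uniq_b /= rev_uniq uniq_c mem_rev has_rev !andbT.
  apply/and3P; split; first by apply/negP => /below_a; rewrite ltxx.
    rewrite negb_or; apply/andP; split; first by apply/negP => /in_b /and3P[_]; rewrite ltxx.
    apply/hasPn => u /in_c /and3P[ji_u m_lt_u u_le_c].
    apply: contraTN m_lt_u => /in_b /and3P[_ _ u_le_b]; apply: max_m.
    by rewrite inE ji_u u_le_b u_le_c.
  by apply/negP => /in_c /and3P[_]; rewrite ltxx.
- by apply: cycle_of_paths hasseJ_sym _ _ _ _;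
    rewrite ?sub_coversJ_hasseJ //; apply: (sub_path sub_coversJ_hasseJ).
Qed.

Lemma acyclic_honest : ~ has_cycle (hasseJ (T:=T)) -> honest T.
Proof.
move=> acyclic a b _ _ cov_ab; apply/negPn/negP => not_cov; apply: acyclic.
have [c cov_ac /andP[c_nle_b b_nle_c]] := coversJ_sibling cov_ab not_cov.
exact: siblings_cycle cov_ab cov_ac c_nle_b b_nle_c.
Qed.

End Lattice.

Theorem mainTheorem4 (d : Order.disp_t) (L : finTBDistrLatticeType d) :
  tree_lattice L <-> honest L.
Proof.
split=> [[_ acyclic] | honest_L]; first exact: acyclic_honest.
by split; [exact: connect_hasseJ | exact: honest_acyclic].
Qed.
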